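(* For every prime $p$, every integer $t\ge 1$ and every integer $k$ with $1\le k\le p^t$, \[ \overline{M}_k(p^t)=\sum_{j=1}^{p^t} f_k\!\left(\left\lfloor \frac{p^t}{j}\right\rfloor\right)-\sum_{j=1}^{p^{t-1}} f_k\!\left(\left\lfloor \frac{p^{t-1}}{j}\right\rfloor\right)+(p-1)\sum_{s=1}^{t}p^{s-1}\sum_{m=1}^{p^{t-s}} f_k\!\left(\left\lfloor \frac{p^t}{1+(m-1)p^s}\right\rfloor\right). \]
   Context: For a nonempty finite set $A$ of positive integers, $(A)$ denotes the greatest common divisor of the elements of $A$. For $m,k\in\mathbb{N}$, $f_k(m)$ is the number of $k$-element subsets $A\subseteq\{1,2,\ldots,m\}$ with $(A)=1$ (so $f_k(m)=0$ if $m<k$). For $1\le k\le n$, \[ \overline{M}_k(n)=\sum_{\substack{A\subseteq\{1,\ldots,n\},\ \#A=k\\ \gcd((A),n)=1}}\gcd((A)-1,n), \] with the convention $\gcd(0,n)=n$. *)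

From mathcomp Require Import all_boot.
Set Implicit Arguments. Unset Strict Implicit. Unset Printing Implicit Defensive.

Definition setgcd (N : nat) (A : {set 'I_N}) : nat := \big[gcdn/0]_(a in A) (a : nat).

(* k-element subsets of {1,...,m}: subsets of 'I_(m.+1) not containing 0 *)
Definition ksubsets (m k : nat) : {set {set 'I_m.+1}} :=
  [set A : {set 'I_m.+1} | (ord0 \notin A) && (#|A| == k)].

Definition fk (k m : nat) : nat :=
  #|[set A in ksubsets m k | setgcd A == 1]|.

(* \overline{M}_k(n); note gcdn 0 n = n as in the paper's convention *)
Definition Mbar (k n : nat) : nat :=
  \sum_(A in ksubsets n k | coprime (setgcd A) n) gcdn (setgcd A).-1 n.

From mathcomp Require Import all_boot.
Set Implicit Arguments. Unset Strict Implicit. Unset Printing Implicit Defensive.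

(* 1. Scaling by d is a bijection between the k-subsets of {1,...,n/d} with
      gcd 1 and the k-subsets of {1,...,n} with gcd d, so the latter number
      f_k(n/d).  Grouping subsets by their gcd g therefore gives
        Mbar_k(n) = sum_(1 <= g <= n) [coprime g n] gcd(g-1, n) f_k(n/g).
   2. For n = p^t and 1 <= g <= n, with G g := f_k(n/g):
      - [coprime g n] gcd(g-1,n) + [p | g] = gcd(g-1,n), and
      - gcd(g-1, p^t) = 1 + (p-1) sum_(1 <= s <= t) p^(s-1) [p^s | g-1].
   3. Each sum of the theorem is a sum of G over a residue class modulo a
      power of p: the j-th term of the sum over p^(t-1) is G (p j), and the
      m-th term of the inner sum for s is G (1 + (m-1) p^s). *)

Lemma setgcd_dvd (N : nat) (A : {set 'I_N}) (a : 'I_N) : a \in A -> setgcd A %| a.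
Proof. by move=> aA; apply: (dvdn_biggcdP _ _ _ (dvdnn (setgcd A))). Qed.

Lemma setgcd_bounds (n : nat) (A : {set 'I_n.+1}) (a : 'I_n.+1) :
  a \in A -> ord0 \notin A -> 0 < setgcd A <= n.
Proof.
move=> aA A0; have a_gt0 : 0 < a.
  by rewrite lt0n; apply: contraNneq A0 => a0; rewrite -(_ : a = ord0) //; apply: val_inj.
have g_le_a := dvdn_leq a_gt0 (setgcd_dvd aA).
have g_gt0 : 0 < setgcd A.
  by rewrite lt0n; apply: contraTneq (setgcd_dvd aA) => ->; rewrite dvd0n -lt0n.
by rewrite g_gt0 (leq_trans g_le_a) // -ltnS.
Qed.

Section ScaleSubsets.
Variables (n d : nat).
Hypothesis d_gt0 : 0 < d.

Definition scale_ord (x : 'I_(n %/ d).+1) : 'I_n.+1 := inord (d * x).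

(* The value of scale_ord: no truncation occurs since x <= n/d. *)
Lemma scale_ordE x : (scale_ord x : nat) = d * x.
Proof.
rewrite /scale_ord inordK // ltnS mulnC.
by apply: leq_trans (leq_mul (leq_ord x) (leqnn d)) _; rewrite leq_divM.
Qed.

Lemma scale_ord_inj : injective scale_ord.
Proof.
move=> x y /(congr1 val); rewrite /= !scale_ordE => /eqP.
by rewrite eqn_pmul2l // => /eqP /val_inj.
Qed.

Lemma scale_ord0 : scale_ord ord0 = ord0.
Proof. by apply: val_inj; rewrite /= scale_ordE muln0. Qed.

Lemma setgcd_scale (B : {set 'I_(n %/ d).+1}) : setgcd (scale_ord @: B) = d * setgcd B.
Proof.
rewrite /setgcd big_imset /=; last by move=> x y _ _; apply: scale_ord_inj.
rewrite (big_morph (muln d) (muln_gcdr d) (muln0 d)).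
by apply: eq_bigr => x _; rewrite scale_ordE.
Qed.

Lemma scale_preimK (A : {set 'I_n.+1}) :
  {in A, forall a : 'I_n.+1, d %| a} -> scale_ord @: (scale_ord @^-1: A) = A.
Proof.
move=> dvdA; apply/setP => a; apply/imsetP/idP => [[x]|aA].
  by rewrite inE => + ->.
have a_div : a %/ d < (n %/ d).+1 by rewrite ltnS leq_div2r // -ltnS.
have scale_a : scale_ord (inord (a %/ d)) = a.
  by apply: val_inj; rewrite /= scale_ordE inordK // mulnC divnK // dvdA.
by exists (inord (a %/ d)); rewrite // inE scale_a.
Qed.

Lemma scale_ksubsets (k : nat) (B : {set 'I_(n %/ d).+1}) :
  (scale_ord @: B \in ksubsets n k) = (B \in ksubsets (n %/ d) k).
Proof.
rewrite !inE card_imset; last exact: scale_ord_inj.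
by rewrite -scale_ord0 (mem_imset _ _ scale_ord_inj).
Qed.

Lemma card_setgcd_eq (k : nat) :
  #|[set A in ksubsets n k | setgcd A == d]| = fk k (n %/ d).
Proof.
rewrite /fk -(card_imset _ (imset_inj scale_ord_inj)); apply: eq_card => A.
rewrite inE; apply/andP/imsetP => [[Ak /eqP gA]|[B]].
  have Aim : A = scale_ord @: (scale_ord @^-1: A).
    by rewrite scale_preimK // => a aA; rewrite -gA setgcd_dvd.
  exists (scale_ord @^-1: A) => //.
  rewrite inE -scale_ksubsets -Aim Ak /=.
  have : d * setgcd (scale_ord @^-1: A) = d * 1 by rewrite -setgcd_scale -Aim gA muln1.
  by move/eqP; rewrite eqn_pmul2l.
rewrite inE => /andP [Bk /eqP gB] ->.
by rewrite scale_ksubsets Bk setgcd_scale gB muln1.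
Qed.

End ScaleSubsets.

Lemma sum_nat_indicator (m n i : nat) (F : nat -> nat) :
  \sum_(m <= j < n) (j == i) * F j = if m <= i < n then F i else 0.
Proof.
rewrite -(big_nat1_eq addn) big_mkcond; apply: eq_bigr => j _.
by case: eqP; rewrite ?mul1n ?mul0n.
Qed.

Lemma sum_by_setgcd (n k : nat) (F : nat -> nat) : 0 < k ->
  \sum_(A in ksubsets n k) F (setgcd A) = \sum_(1 <= g < n.+1) F g * fk k (n %/ g).
Proof.
move=> k_gt0.
transitivity (\sum_(A in ksubsets n k) \sum_(1 <= g < n.+1) (g == setgcd A) * F g).
  apply: eq_bigr => A; rewrite inE => /andP [A0 /eqP cardA].
  have [a aA] : exists a, a \in A by apply/set0Pn; rewrite -card_gt0 cardA.
  by rewrite sum_nat_indicator ltnS (setgcd_bounds aA).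
rewrite exchange_big /=; apply: eq_big_nat => g /andP [g_gt0 _].
rewrite -card_setgcd_eq // -big_distrl /= mulnC -sum1_card; congr (_ * _).
rewrite big_mkcond [RHS]big_mkcond; apply: eq_bigr => A _.
by rewrite [in RHS]inE eq_sym; case: (A \in _); case: (_ == _).
Qed.

Lemma Mbar_by_gcd (n k : nat) : 0 < k ->
  Mbar k n = \sum_(1 <= g < n.+1) coprime g n * gcdn g.-1 n * fk k (n %/ g).
Proof.
move=> k_gt0; rewrite /Mbar big_mkcondr.
rewrite -(@sum_by_setgcd n k (fun g => coprime g n * gcdn g.-1 n)) //.
by apply: eq_bigr => A _; case: coprime; rewrite ?mul1n.
Qed.

Lemma dvdn_succ_mod (q e : nat) : 0 < q -> (q %| e.+1) = (e %% q == q.-1).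
Proof.
move=> q_gt0; rewrite {1}(divn_eq e q) -addnS dvdn_addr ?dvdn_mull //.
have r_lt_q : (e %% q).+1 <= q by rewrite ltn_mod.
rewrite -eqSS prednK //; apply/idP/eqP => [r_dvd|->]; last exact: dvdnn.
by apply/eqP; rewrite eqn_leq r_lt_q dvdn_leq.
Qed.

Lemma sum_residue (q M r : nat) (F : nat -> nat) : r < q ->
  \sum_(0 <= e < M * q) (e %% q == r) * F e = \sum_(0 <= j < M) F (j * q + r).
Proof.
move=> r_lt_q; rewrite big_nat_mul; apply: eq_bigr => j _.
rewrite mulSn -{1}[j * q]add0n big_addn addnK.
rewrite (eq_big_nat _ _ (F2 := fun i => (i == r) * F (j * q + i))) => [|i /andP [_ i_lt_q]].
  by rewrite sum_nat_indicator r_lt_q.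
by rewrite addnC modnMDl modn_small.
Qed.

Lemma sum_multiples (q M : nat) (F : nat -> nat) : 0 < q ->
  \sum_(1 <= j < M.+1) F (q * j) = \sum_(1 <= g < (M * q).+1) (q %| g) * F g.
Proof.
move=> q_gt0; rewrite !big_add1 /= [RHS](eq_bigr (fun e => (e %% q == q.-1) * F e.+1)).
  rewrite sum_residue ?prednK //; apply: eq_bigr => j _.
  by rewrite -addnS prednK // mulnS addnC mulnC.
by move=> e _; rewrite dvdn_succ_mod.
Qed.

Lemma sum_shifted_multiples (q M : nat) (F : nat -> nat) : 0 < q ->
  \sum_(1 <= m < M.+1) F (1 + (m - 1) * q) = \sum_(1 <= g < (M * q).+1) (q %| g.-1) * F g.
Proof.
move=> q_gt0; rewrite !big_add1 /= (@sum_residue q M 0 (fun e => F e.+1)) //.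
by apply: eq_bigr => j _; rewrite subn1 addn0 add1n.
Qed.

(* Step 2a: g is prime to p^t unless p | g, and then g-1 is prime to p^t. *)
Lemma gcd_pred_coprime_split (p t g : nat) : prime p -> 0 < t -> 0 < g ->
  coprime g (p ^ t) * gcdn g.-1 (p ^ t) + (p %| g) = gcdn g.-1 (p ^ t).
Proof.
move=> p_pr t_gt0 g_gt0; rewrite coprime_pexpr // coprime_sym prime_coprime //.
case: (boolP (p %| g)) => [p_dvd_g|_]; last by rewrite mul1n addn0.
suff /eqP -> : coprime g.-1 (p ^ t) by [].
rewrite coprime_pexpr // coprime_sym prime_coprime //; apply: contraL p_dvd_g => p_dvd.
by rewrite -(prednK g_gt0) -addn1 dvdn_addr // dvdn1 neq_ltn prime_gt1 ?orbT.
Qed.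

Lemma gcdn_pexpS (p t e : nat) : prime p ->
  gcdn e (p ^ t.+1) = if p ^ t.+1 %| e then p ^ t.+1 else gcdn e (p ^ t).
Proof.
move=> p_pr; case: ifPn => [/gcdn_idPr //|not_dvd].
have [i i_le g_eq] := dvdn_pfactor _ _ p_pr (dvdn_gcdr e (p ^ t.+1)).
have i_le_t : i <= t.
  rewrite -ltnS ltn_neqAle i_le andbT; apply: contraNneq not_dvd => i_eq.
  by rewrite -i_eq -g_eq dvdn_gcdl.
apply/eqP; rewrite eqn_dvd !dvdn_gcd !dvdn_gcdl {1}g_eq dvdn_exp2l //=.
by rewrite (dvdn_trans (dvdn_gcdr _ _)) // dvdn_exp2l.
Qed.

Lemma gcdn_pexp_expansion (p t e : nat) : prime p ->
  gcdn e (p ^ t) = 1 + (p - 1) * \sum_(1 <= s < t.+1) p ^ s.-1 * (p ^ s %| e).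
Proof.
move=> p_pr; elim: t => [|t IH]; first by rewrite big_geq // expn0 gcdn1 muln0.
rewrite big_nat_recr //= mulnDr addnA -IH gcdn_pexpS //.
case: ifPn => [dvd_t1|_]; last by rewrite !muln0 addn0.
have dvd_t : p ^ t %| e by apply: dvdn_trans dvd_t1; rewrite dvdn_exp2l.
by rewrite (gcdn_idPr dvd_t) muln1 -{1}(mul1n (p ^ t)) -mulnDl subnKC ?prime_gt0 // expnS.
Qed.

Lemma sum_gcd_weighted (p t N : nat) (G : nat -> nat) : prime p ->
  \sum_(1 <= g < N.+1) gcdn g.-1 (p ^ t) * G g =
  \sum_(1 <= g < N.+1) G g
  + (p - 1) * \sum_(1 <= s < t.+1) p ^ s.-1 * \sum_(1 <= g < N.+1) (p ^ s %| g.-1) * G g.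
Proof.
move=> p_pr.
under eq_bigr => g _ do rewrite gcdn_pexp_expansion // mulnDl mul1n -mulnA big_distrl.
rewrite big_split /= -big_distrr /= exchange_big /=; congr (_ + _ * _).
by apply: eq_bigr => s _; rewrite big_distrr; apply: eq_bigr => g _ /=; rewrite mulnA.
Qed.

(* The sum over p^(t-1) and the inner sums over p^(t-s) are sums of
   G g = f_k(p^t / g) over residue classes (step 3); adding the sum over p^(t-1)
   to Mbar turns its weights into gcd(g-1, p^t) (step 2a), which then expand
   by step 2b. *)
Theorem mainTheorem4 (p t k : nat) :
  prime p -> 1 <= t -> 1 <= k <= p ^ t ->
  Mbar k (p ^ t) + \sum_(1 <= j < (p ^ t.-1).+1) fk k (p ^ t.-1 %/ j) =
  \sum_(1 <= j < (p ^ t).+1) fk k (p ^ t %/ j)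
  + (p - 1) * \sum_(1 <= s < t.+1) p ^ s.-1 *
      \sum_(1 <= m < (p ^ (t - s)).+1) fk k (p ^ t %/ (1 + (m - 1) * p ^ s)).
Proof.
move=> p_pr t_gt0 /andP [k_gt0 _]; have p_gt0 := prime_gt0 p_pr.
set N := p ^ t; pose G g := fk k (N %/ g).
have N_split s : s <= t -> N = p ^ (t - s) * p ^ s by move=> s_le; rewrite /N -expnD subnK.
have coarse : \sum_(1 <= j < (p ^ t.-1).+1) fk k (p ^ t.-1 %/ j)
              = \sum_(1 <= g < N.+1) (p %| g) * G g.
  rewrite (N_split 1 t_gt0) subn1 expn1 -sum_multiples //.
  by apply: eq_bigr => j _; rewrite /G /N -(prednK t_gt0) expnS divnMA mulKn.
have fine s : s < t.+1 ->
    \sum_(1 <= m < (p ^ (t - s)).+1) fk k (N %/ (1 + (m - 1) * p ^ s))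
    = \sum_(1 <= g < N.+1) (p ^ s %| g.-1) * G g.
  by move=> s_le_t; rewrite (@sum_shifted_multiples _ _ G) ?expn_gt0 ?p_gt0 // -N_split.
rewrite Mbar_by_gcd // coarse -big_split /=.
under eq_big_nat => g /andP [g_gt0 _] do rewrite -mulnDl gcd_pred_coprime_split //.
rewrite sum_gcd_weighted //; congr (_ + _ * _).
by apply: eq_big_nat => s /andP [_ s_le_t]; rewrite fine.
Qed.
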